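(* Let $K$ be a field of characteristic $p>0$, $k=\bigcap_{n\ge0}K^{p^n}$, with $K/k$ finitely generated. Let $W_1$ be a subfield with $K^p\subset W_1\subset K$. Then there exists a subfield $W_2\subset W_1$ with $K^{p^2}\subset W_2$, $W_2\cdot K^p=W_1$ and $[W_1:W_2]=[K:W_1]$; i.e. $(K,W_1,W_2,W_2,W_2,\dots)$ is a power tower on $K$ with $[K:W_1]=[W_1:W_2]$.
   Context: $K^{p^n}=\{x^{p^n}:x\in K\}$; $A\cdot B$ is the composite of subfields. A power tower on $K$ is a sequence of subfields $W_0,W_1,\ldots$ with $W_j=W_i\cdot K^{p^j}$ for all $0\le j\le i$. *)

From HB Require Import structures.
From mathcomp Require Import all_boot all_order all_algebra.
Set Implicit Arguments. Unset Strict Implicit. Unset Printing Implicit Defensive.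
Import GRing.Theory.
Local Open Scope ring_scope.

Section Defs.
Variable K : fieldType.

Definition is_subfield (S : K -> Prop) : Prop :=
  [/\ S 0, S 1,
      (forall x y, S x -> S y -> S (x - y)),
      (forall x y, S x -> S y -> S (x * y)) &
      (forall x, S x -> x != 0 -> S x^-1)].

Definition subset_of (A B : K -> Prop) : Prop := forall x, A x -> B x.
Definition same_set (A B : K -> Prop) : Prop := forall x, A x <-> B x.

Definition powfield (p n : nat) : K -> Prop := fun x => exists y : K, x = y ^+ (p ^ n).

Definition perfect_core (p : nat) : K -> Prop := fun x => forall n, powfield p n x.

Definition composite (A B : K -> Prop) : K -> Prop :=
  fun x => forall S, is_subfield S -> subset_of A S -> subset_of B S -> S x.

Definition adjoin (A : K -> Prop) (s : seq K) : K -> Prop :=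
  composite A (fun x => x \in s).

Definition fin_gen_over (k : K -> Prop) : Prop :=
  exists s : seq K, forall x, adjoin k s x.

Definition degree_is (L M : K -> Prop) (n : nat) : Prop :=
  exists b : 'I_n -> K,
    [/\ (forall i, L (b i)),
        (forall c : 'I_n -> K, (forall i, M (c i)) ->
            \sum_(i < n) c i * b i = 0 -> forall i, c i = 0) &
        (forall x, L x -> exists2 c : 'I_n -> K,
            (forall i, M (c i)) & x = \sum_(i < n) c i * b i)].

End Defs.

From HB Require Import structures.
From mathcomp Require Import all_boot all_order all_algebra.
From Stdlib Require Import FunctionalExtensionality PropExtensionality ClassicalEpsilon Lia.
From mathcomp Require Import zify.
(* Since k is contained in K^p and K = k(s), the extension K/K^p is finite: W1 = K^p(a) for a
   sequence a that is p-independent over K^p, and K = W1(c) for c p-independent over W1.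
   Put W2 := W1^p(a). Then K^(p^2) = (K^p)^p <= W1^p <= W2 <= W1 and W2.K^p = K^p(a) = W1.
   Adjoining a p-th root outside the base multiplies the degree by p, and the Frobenius map
   preserves degrees, so [K : K^(p^2)] = [K : K^p]^2 = p^(2(|a| + |c|)); along the tower
   K >= W1 >= W2 >= W1^p >= K^(p^2) the same degree is p^|c| [W1 : W2] p^|a| p^|a|.
   Hence [W1 : W2] = p^|c| = [K : W1]. *)

Set Implicit Arguments. Unset Strict Implicit. Unset Printing Implicit Defensive.
Import GRing.Theory.
Local Open Scope ring_scope.

Section Subfields.
Variable K : fieldType.
Implicit Types (A B F G S : K -> Prop) (t u : seq K).

Lemma predext A B : same_set A B -> A = B.
Proof.
by move=> eqAB; apply: functional_extensionality => x; apply: propositional_extensionality.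
Qed.

Section SubfieldClosure.
Variable F : K -> Prop.
Hypothesis subF : is_subfield F.

Lemma subfield0 : F 0. Proof. by case: subF. Qed.
Lemma subfield1 : F 1. Proof. by case: subF. Qed.
Lemma subfieldB x y : F x -> F y -> F (x - y). Proof. by case: subF => _ _ + _ _; apply. Qed.
Lemma subfieldM x y : F x -> F y -> F (x * y). Proof. by case: subF => _ _ _ + _; apply. Qed.
Lemma subfieldN x : F x -> F (- x). Proof. by rewrite -sub0r; apply: subfieldB subfield0. Qed.

Lemma subfieldD x y : F x -> F y -> F (x + y).
Proof. by move=> Fx Fy; rewrite -[y]opprK; apply/subfieldB/subfieldN. Qed.

Lemma subfieldV x : F x -> F x^-1.
Proof.
by case: (eqVneq x 0) => [-> | x_neq0 Fx]; [rewrite invr0 | case: subF => _ _ _ _; apply].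
Qed.

Lemma subfieldX x n : F x -> F (x ^+ n).
Proof.
by move=> Fx; elim: n => [|n IHn]; rewrite ?expr0 ?exprS; [apply: subfield1 | apply: subfieldM].
Qed.

Lemma subfield_sum (I : finType) (P : pred I) (f : I -> K) :
  (forall i, P i -> F (f i)) -> F (\sum_(i | P i) f i).
Proof. by move=> Ff; apply: (big_ind F) => //; [apply: subfield0 | apply: subfieldD]. Qed.

End SubfieldClosure.

Lemma subfieldT : is_subfield (fun _ : K => True). Proof. by []. Qed.

Lemma composite_subfield A B : is_subfield (composite A B).
Proof.
split.
- by move=> S subS _ _; apply: subfield0.
- by move=> S subS _ _; apply: subfield1.
- by move=> x y Cx Cy S subS AS BS; apply: subfieldB; [| apply: Cx | apply: Cy].
- by move=> x y Cx Cy S subS AS BS; apply: subfieldM; [| apply: Cx | apply: Cy].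
- move=> x Cx x_neq0 S subS AS BS; case: (subS) => _ _ _ _ SV.
  by apply: (SV _ _ x_neq0); apply: Cx.
Qed.

Lemma composite_subl A B : subset_of A (composite A B).
Proof. by move=> x Ax S _ AS _; apply: AS. Qed.

Lemma composite_subr A B : subset_of B (composite A B).
Proof. by move=> x Bx S _ _ BS; apply: BS. Qed.

Lemma composite_min A B S :
  is_subfield S -> subset_of A S -> subset_of B S -> subset_of (composite A B) S.
Proof. by move=> subS AS BS x; apply. Qed.

Lemma adjoin_subfield F t : is_subfield (adjoin F t). Proof. exact: composite_subfield. Qed.
Lemma adjoin_base F t : subset_of F (adjoin F t). Proof. exact: composite_subl. Qed.
Lemma adjoin_mem F t x : x \in t -> adjoin F t x. Proof. exact: composite_subr. Qed.

Lemma adjoin_min F t S :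
  is_subfield S -> subset_of F S -> (forall x, x \in t -> S x) -> subset_of (adjoin F t) S.
Proof. exact: composite_min. Qed.

Lemma adjoin_sub F G t : subset_of F G -> subset_of (adjoin F t) (adjoin G t).
Proof.
move=> FG; apply: adjoin_min; [exact: adjoin_subfield | | exact: adjoin_mem].
by move=> x /FG; apply: adjoin_base.
Qed.

Lemma adjoin_nil F : is_subfield F -> adjoin F [::] = F.
Proof. by move=> subF; apply: predext => x; split; [apply: adjoin_min | apply: adjoin_base]. Qed.

Lemma adjoin_cat F t u : adjoin F (t ++ u) = adjoin (adjoin F t) u.
Proof.
apply: predext => x; split; apply: adjoin_min; try exact: adjoin_subfield.
- by move=> y Fy; do 2 apply: adjoin_base.
- move=> y; rewrite mem_cat => /orP[ty | uy]; last exact: adjoin_mem.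
  by apply: adjoin_base; apply: adjoin_mem.
- apply: adjoin_min; first exact: adjoin_subfield; first exact: adjoin_base.
  by move=> y ty; apply: adjoin_mem; rewrite mem_cat ty.
- by move=> y uy; apply: adjoin_mem; rewrite mem_cat uy orbT.
Qed.

Lemma adjoin_rcons F t x : adjoin F (rcons t x) = adjoin (adjoin F t) [:: x].
Proof. by rewrite -cats1 adjoin_cat. Qed.

Lemma adjoin_seq1_id F x : is_subfield F -> F x -> adjoin F [:: x] = F.
Proof.
move=> subF Fx; apply: predext => y; split; last exact: adjoin_base.
by apply: adjoin_min => // z; rewrite inE => /eqP ->.
Qed.

End Subfields.

Arguments subfieldT {K}.

Section Degrees.
Variable K : fieldType.
Implicit Types L M N : K -> Prop.

Definition is_basis L M (I : finType) (b : I -> K) :=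
  [/\ forall i, L (b i),
      forall c : I -> K, (forall i, M (c i)) -> \sum_i c i * b i = 0 -> forall i, c i = 0 &
      forall x, L x -> exists2 c : I -> K, (forall i, M (c i)) & x = \sum_i c i * b i].

Lemma degree_isP L M n :
  degree_is L M n <-> exists (I : finType) (b : I -> K), #|I| = n /\ is_basis L M b.
Proof.
split=> [[b basis_b] | [I [b [<- [Lb indep_b span_b]]]]]; first by exists 'I_n, b; rewrite card_ord.
have reindex (c : I -> K) : \sum_i c i * b i = \sum_(j < #|I|) c (enum_val j) * b (enum_val j).
  by rewrite (reindex _ (onW_bij _ (@enum_val_bij I))).
exists (fun j => b (enum_val j)); split=> [j | c Mc | x /span_b [c Mc ->]].
- exact: Lb.
- move=> c0 j; rewrite -[j]enum_valK.
  apply: (indep_b (fun i => c (enum_rank i))) => [i |]; first exact: Mc.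
  by rewrite reindex; under eq_bigr do rewrite enum_valK.
- by exists (fun j => c (enum_val j)) => [j | ]; [apply: Mc | rewrite reindex].
Qed.

Lemma basis_coords L M (I : finType) (b : I -> K) (J : Type) (f : J -> K) :
  is_basis L M b -> (forall j, L (f j)) ->
  exists coord : J -> I -> K, forall j, (forall i, M (coord j i)) /\ f j = \sum_i coord j i * b i.
Proof.
case=> _ _ span_b Lf.
apply: (@choice J (I -> K) (fun j c => (forall i, M (c i)) /\ f j = \sum_i c i * b i)) => j.
by have [c Mc ->] := span_b _ (Lf j); exists c.
Qed.

Lemma basis_coord_uniq L M (I : finType) (b : I -> K) (c d : I -> K) :
  is_subfield M -> is_basis L M b -> (forall i, M (c i)) -> (forall i, M (d i)) ->
  \sum_i c i * b i = \sum_i d i * b i -> forall i, c i = d i.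
Proof.
move=> subM [_ indep_b _] Mc Md eq_cd i; apply/eqP; rewrite -subr_eq0; apply/eqP.
apply: (indep_b (fun i => c i - d i)) => [j | ]; first exact: subfieldB.
by under eq_bigr do rewrite mulrBl; rewrite sumrB eq_cd subrr.
Qed.

Lemma degree_le L M n m : is_subfield M -> degree_is L M n -> degree_is L M m -> (n <= m)%N.
Proof.
move=> subM [b bas_b] [b' bas_b'].
have [B coordB] := basis_coords bas_b' (let: And3 Lb _ _ := bas_b in Lb).
have [A coordA] := basis_coords bas_b (let: And3 Lb' _ _ := bas_b' in Lb').
have BA1 : (\matrix_(i, j) B i j) *m (\matrix_(j, k) A j k) = 1%:M :> 'M[K]_n.
  apply/matrixP => i k; rewrite !mxE; under eq_bigr do rewrite !mxE.
  apply: (basis_coord_uniq (c := fun k => \sum_j B i j * A j k) (d := fun k => (i == k)%:R)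
           subM bas_b)
    => [l | l | ].
  - by apply: subfield_sum => // j _; apply: subfieldM => //; [case: (coordB i) | case: (coordA j)].
  - by case: (i == l); [apply: subfield1 | apply: subfield0].
  have -> : \sum_l (i == l)%:R * b l = b i.
    rewrite (bigD1 i) //= eqxx mul1r big1 ?addr0 // => l.
    by rewrite eq_sym => /negbTE ->; rewrite mul0r.
  rewrite [RHS](proj2 (coordB i)); under [RHS]eq_bigr do rewrite (proj2 (coordA _)) mulr_sumr.
  rewrite [RHS]exchange_big; apply: eq_bigr => l _; rewrite mulr_suml.
  by apply: eq_bigr => j _; rewrite mulrA.
by have := mxrankM_maxr (\matrix_(i, j) B i j) (\matrix_(j, k) A j k); rewrite BA1 mxrank1;
  move/leq_trans; apply; apply: rank_leq_row.
Qed.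

Lemma degree_uniq L M n m : is_subfield M -> degree_is L M n -> degree_is L M m -> n = m.
Proof.
by move=> subM Dn Dm; apply/eqP; rewrite eqn_leq (degree_le subM Dn Dm) (degree_le subM Dm Dn).
Qed.

Lemma degree_refl (F : K -> Prop) : is_subfield F -> degree_is F F 1.
Proof.
move=> subF; exists (fun _ => 1); split=> [_ | c _ | x Fx]; first exact: subfield1.
- by rewrite big_ord1 mulr1 => c0 i; rewrite ord1.
- by exists (fun _ => x) => //; rewrite big_ord1 mulr1.
Qed.

Lemma is_basis_tower L M N (I J : finType) (b : I -> K) (e : J -> K) :
  is_subfield L -> is_subfield M -> subset_of N M -> subset_of M L ->
  is_basis L M b -> is_basis M N e -> is_basis L N (fun ij : I * J => e ij.2 * b ij.1).
Proof.
move=> subL subM NM ML bas_b bas_e; have [Lb indep_b span_b] := bas_b; have [Me indep_e _] := bas_e.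
have sum_pair (c : I * J -> K) :
    \sum_(ij : I * J) c ij * (e ij.2 * b ij.1) = \sum_i (\sum_j c (i, j) * e j) * b i.
  transitivity (\sum_i \sum_j c (i, j) * (e j * b i)).
    by rewrite pair_big; apply: eq_bigr => -[].
  by apply: eq_bigr => i _; rewrite mulr_suml; apply: eq_bigr => j _; rewrite mulrA.
have Msum (c : I * J -> K) i : (forall ij, N (c ij)) -> M (\sum_j c (i, j) * e j).
  by move=> Nc; apply: subfield_sum => // j _; apply: subfieldM => //; apply: NM.
split=> [[i j] | c Nc | x /span_b [y My ->]].
- by apply: subfieldM => //; apply: ML.
- rewrite sum_pair => /(indep_b _ (fun i => Msum c i Nc)) c0 [i j].
  exact: (indep_e (fun j => c (i, j))).
- have [C coordC] := basis_coords bas_e My.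
  exists (fun ij => C ij.1 ij.2) => [[i j] | ]; first by case: (coordC i).
  by rewrite sum_pair; apply: eq_bigr => i _; case: (coordC i) => _ <-.
Qed.

Lemma degree_tower L M N n m :
  is_subfield L -> is_subfield M -> subset_of N M -> subset_of M L ->
  degree_is L M n -> degree_is M N m -> degree_is L N (n * m).
Proof.
move=> subL subM NM ML /degree_isP[I [b [<- bas_b]]] /degree_isP[J [e [<- bas_e]]].
apply/(degree_isP L N); exists (I * J)%type, (fun ij : I * J => e ij.2 * b ij.1).
by rewrite card_prod; split=> //; exact: (is_basis_tower subL subM NM ML bas_b bas_e).
Qed.

End Degrees.

Section PolyOver.
Variables (K : fieldType) (G : K -> Prop).
Hypothesis subG : is_subfield G.
Implicit Types P Q g : {poly K}.

Definition poly_over P := forall i, G P`_i.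

Lemma poly_overB P Q : poly_over P -> poly_over Q -> poly_over (P - Q).
Proof. by move=> GP GQ i; rewrite coefB; apply: subfieldB. Qed.

Lemma poly_overM P Q : poly_over P -> poly_over Q -> poly_over (P * Q).
Proof. by move=> GP GQ i; rewrite coefM; apply: subfield_sum => // j _; apply: subfieldM. Qed.

Lemma poly_overC c : G c -> poly_over c%:P.
Proof. by move=> Gc i; rewrite coefC; case: (i == 0)%N => //; apply: subfield0. Qed.

Lemma poly_overZ c P : G c -> poly_over P -> poly_over (c *: P).
Proof. by move=> Gc GP i; rewrite coefZ; apply: subfieldM. Qed.

Lemma poly_overXn n : poly_over 'X^n.
Proof. by move=> i; rewrite coefXn; case: (i == n); [apply: subfield1 | apply: subfield0]. Qed.

Lemma size_sub_lead_lt P Q : (0 < size P)%N -> size Q = size P -> lead_coef Q = lead_coef P ->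
  (size (P - Q)%R < size P)%N.
Proof.
move=> P_gt0 sizeQ leadQ; rewrite -(prednK P_gt0) ltnS; apply/leq_sizeP => j.
rewrite leq_eqVlt => /orP[/eqP <- | ltPj].
  by move: leadQ; rewrite coefB /lead_coef sizeQ => ->; rewrite subrr.
by rewrite coefB !nth_default ?subrr ?sizeQ // -(prednK P_gt0).
Qed.

Lemma poly_over_edivp P g : poly_over g -> g \is monic -> poly_over P ->
  exists q r, [/\ P = q * g + r, (size r < size g)%N & poly_over r].
Proof.
move=> Gg mon_g; have [n] := ubnP (size P); elim: n P => // n IHn P lt_Pn GP.
have [lt_Pg | le_gP] := ltnP (size P) (size g); first by exists 0, P; rewrite mul0r add0r.
have g_gt0 : (0 < size g)%N by rewrite size_poly_gt0 monic_neq0.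
have P_neq0 : P != 0 by rewrite -size_poly_gt0 (leq_trans g_gt0).
set m := (size P - size g)%N; set c := lead_coef P.
have c_neq0 : c != 0 by rewrite lead_coef_eq0.
set Q := c *: 'X^m * g.
have sizeQ : size Q = size P.
  rewrite size_Mmonic // ?size_scale ?size_polyXn ?addSn /= ?subnK //.
  by rewrite -size_poly_gt0 size_scale ?size_polyXn.
have leadQ : lead_coef Q = c by rewrite lead_coef_Mmonic // lead_coefZ lead_coefXn mulr1.
have GQ : poly_over Q by apply: poly_overM => //; apply: poly_overZ (GP _) (poly_overXn _).
have [q [r [PQE lt_rg Gr]]] : exists q r, [/\ P - Q = q * g + r, (size r < size g)%N & poly_over r].
  apply: IHn; last exact: poly_overB.
  by rewrite -ltnS (leq_trans _ lt_Pn) // ltnS size_sub_lead_lt ?(leq_trans g_gt0).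
exists (q + c *: 'X^m), r; split=> //.
by rewrite mulrDl -addrAC -PQE subrK.
Qed.

End PolyOver.

Lemma subfield_coprime_exp (K : fieldType) (F : K -> Prop) (x : K) (k m : nat) :
  is_subfield F -> (0 < m)%N -> coprime m k -> F (x ^+ k) -> F (x ^+ m) -> F x.
Proof.
move=> subF m_gt0 co_mk Fxk Fxm; have [-> | x_neq0] := eqVneq x 0; first exact: subfield0.
have [a _] := @Bezoutl m k m_gt0; rewrite (eqP co_mk) => /dvdnP[v def_v].
have -> : x = (x ^+ m) ^+ v / (x ^+ k) ^+ a.
  by rewrite -!exprM -mulnC -def_v exprS -mulnC exprM mulfK ?expf_neq0.
by apply: (subfieldM subF); [| apply: (subfieldV subF)]; apply: (subfieldX subF).
Qed.

Section Frobenius.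
Variables (K : fieldType) (p : nat).
Hypothesis pcharK : p \in [pchar K].
Implicit Types (F G L M : K -> Prop) (t : seq K).

Let p_gt0 : (0 < p)%N. Proof. exact/prime_gt0/(pcharf_prime pcharK). Qed.

Lemma frobB (x y : K) : (x - y) ^+ p = x ^+ p - y ^+ p.
Proof. by rewrite -!(pFrobenius_autE pcharK) rmorphB. Qed.

Lemma frobN (x : K) : (- x) ^+ p = - x ^+ p.
Proof. by rewrite -!(pFrobenius_autE pcharK) rmorphN. Qed.

Lemma frob_sum (I : finType) (f : I -> K) : (\sum_i f i) ^+ p = \sum_i f i ^+ p.
Proof. by rewrite -(pFrobenius_autE pcharK) rmorph_sum. Qed.

Lemma frob_inj : injective (fun x : K => x ^+ p).
Proof. by move=> x y /=; rewrite -!(pFrobenius_autE pcharK); apply: fmorph_inj. Qed.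

Definition frob_image F : K -> Prop := fun y => exists2 x, F x & y = x ^+ p.

Definition pth_pow_in F t := forall x, x \in t -> F (x ^+ p).

Lemma frob_image_subfield F : is_subfield F -> is_subfield (frob_image F).
Proof.
move=> subF; split.
- by exists 0; [apply: subfield0 | rewrite expr0n gtn_eqF].
- by exists 1; [apply: subfield1 | rewrite expr1n].
- by move=> _ _ [x Fx ->] [y Fy ->]; exists (x - y); [apply: subfieldB | rewrite frobB].
- by move=> _ _ [x Fx ->] [y Fy ->]; exists (x * y); [apply: subfieldM | rewrite exprMn].
- by move=> _ [x Fx ->] _; exists x^-1; [apply: subfieldV | rewrite exprVn].
Qed.

Lemma frob_image_sub F G : subset_of F G -> subset_of (frob_image F) (frob_image G).
Proof. by move=> FG _ [x Fx ->]; exists x => //; apply: FG. Qed.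

Lemma powfield1E : powfield p 1 = frob_image (fun _ => True).
Proof. by apply: predext => y; rewrite /powfield expn1; split=> [[x ->] | [x _ ->]]; exists x. Qed.

Lemma powfield1_subfield : is_subfield (@powfield K p 1).
Proof. by rewrite powfield1E; apply: frob_image_subfield; apply: subfieldT. Qed.

Lemma powfield2E : powfield p 2 = frob_image (powfield p 1).
Proof.
apply: predext => y; rewrite /powfield expn1 -[(p ^ 2)%N]mulnn.
split=> [[x ->] | [_ [x ->] ->]]; last by exists x; rewrite exprM.
by exists (x ^+ p); [exists x | rewrite exprM].
Qed.

Lemma degree_frob_image L M n : degree_is L M n -> degree_is (frob_image L) (frob_image M) n.
Proof.
case=> b [Lb indep_b span_b]; exists (fun i => b i ^+ p).
split=> [i | c Mc | _ [x /span_b [c Mc ->] ->]].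
- by exists (b i).
- move=> sum0 i; have [d Md] : exists d, forall i, M (d i) /\ c i = d i ^+ p.
    by apply: (@choice _ K (fun i x => M x /\ c i = x ^+ p)) => j; have [x Mx ->] := Mc j; exists x.
  have d0 : \sum_i d i * b i = 0.
    apply: frob_inj; rewrite /= frob_sum expr0n gtn_eqF //= -[RHS]sum0.
    by apply: eq_bigr => j _; rewrite exprMn; case: (Md j) => _ <-.
  by case: (Md i) => _ ->; rewrite (indep_b d (fun j => proj1 (Md j)) d0 i) expr0n gtn_eqF.
- exists (fun i => c i ^+ p) => [i | ]; first by exists (c i).
  by rewrite frob_sum; apply: eq_bigr => i _; rewrite exprMn.
Qed.

Inductive ring_gen (F T : K -> Prop) : K -> Prop :=
| ring_gen_base x : F x -> ring_gen F T x
| ring_gen_new x : T x -> ring_gen F T x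
| ring_gen_sub x y : ring_gen F T x -> ring_gen F T y -> ring_gen F T (x - y)
| ring_gen_mul x y : ring_gen F T x -> ring_gen F T y -> ring_gen F T (x * y).

Section RingGen.
Variables F T : K -> Prop.
Hypotheses (subF : is_subfield F) (TF : forall x, T x -> F (x ^+ p)).

Lemma ring_gen_pth_pow x : ring_gen F T x -> F (x ^+ p).
Proof.
elim=> {x} [x Fx | x Tx | x y _ Fx _ Fy | x y _ Fx _ Fy].
- by rewrite -(pFrobenius_autE pcharK); apply: subfieldX.
- exact: TF.
- by rewrite frobB; apply: subfieldB.
- by rewrite exprMn; apply: subfieldM.
Qed.

Lemma ring_gen_exp x n : ring_gen F T x -> ring_gen F T (x ^+ n).
Proof.
move=> Rx; elim: n => [|n IHn]; first by rewrite expr0; apply: ring_gen_base; apply: subfield1.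
by rewrite exprS; apply: ring_gen_mul.
Qed.

(* Inverses come for free: x^-1 = x^(p-1) * (x^p)^-1 with x^p in F. *)
Lemma ring_gen_subfield : is_subfield (ring_gen F T).
Proof.
split=> [|| x y | x y | x Rx x_neq0].
- by apply: ring_gen_base; apply: subfield0.
- by apply: ring_gen_base; apply: subfield1.
- exact: ring_gen_sub.
- exact: ring_gen_mul.
- have -> : x^-1 = x ^+ p.-1 * (x ^+ p)^-1.
    by rewrite -{2}(prednK p_gt0) exprS invfM mulrCA mulfV ?mulr1 // expf_neq0.
  apply: ring_gen_mul; first exact: ring_gen_exp.
  by apply: ring_gen_base; apply: subfieldV => //; apply: ring_gen_pth_pow.
Qed.

End RingGen.

Lemma adjoin_sub_ring_gen F t : is_subfield F -> pth_pow_in F t ->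
  subset_of (adjoin F t) (ring_gen F (fun x => x \in t)).
Proof.
move=> subF tF; apply: adjoin_min; first exact: ring_gen_subfield.
- exact: ring_gen_base.
- exact: ring_gen_new.
Qed.

Lemma adjoin_ind F t (P : K -> Prop) : is_subfield F -> pth_pow_in F t ->
  subset_of F P -> (forall x, x \in t -> P x) ->
  (forall x y, P x -> P y -> P (x - y)) -> (forall x y, P x -> P y -> P (x * y)) ->
  subset_of (adjoin F t) P.
Proof.
move=> subF tF FP tP PB PM x /(adjoin_sub_ring_gen subF tF).
by elim=> {x} [x /FP | x /tP | x y _ + _ | x y _ + _] //; [apply: PB | apply: PM].
Qed.

Lemma adjoin_pth_pow F t x : is_subfield F -> pth_pow_in F t -> adjoin F t x -> F (x ^+ p).
Proof. by move=> subF tF /(adjoin_sub_ring_gen subF tF); apply: ring_gen_pth_pow. Qed.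

Lemma frob_image_adjoin F t : is_subfield F -> pth_pow_in F t ->
  frob_image (adjoin F t) = adjoin (frob_image F) (map (fun x => x ^+ p) t).
Proof.
move=> subF tF; apply: predext => y; split.
- case=> x + ->; apply: (adjoin_ind (P := fun x => adjoin _ _ (x ^+ p))) => //
    [z Fz | z tz | z w | z w].
  + by apply: adjoin_base; exists z.
  + by apply: adjoin_mem; apply: map_f.
  + by rewrite frobB; apply: subfieldB; apply: adjoin_subfield.
  + by rewrite exprMn; apply: subfieldM; apply: adjoin_subfield.
- apply: adjoin_min; first by apply: frob_image_subfield; apply: adjoin_subfield.
  + by apply: frob_image_sub; apply: adjoin_base.
  + by move=> _ /mapP[x tx ->]; exists x => //; apply: adjoin_mem.
Qed.

End Frobenius.

Section AdjoinPthRoot.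
Variables (K : fieldType) (p : nat) (G : K -> Prop) (x : K).
Hypotheses (pcharK : p \in [pchar K]) (subG : is_subfield G).
Hypotheses (Gxp : G (x ^+ p)) (notGx : ~ G x).

Let p_prime : prime p. Proof. exact: pcharf_prime pcharK. Qed.
Let p_gt0 : (0 < p)%N. Proof. exact: prime_gt0. Qed.

Let GXp : poly_over G ('X^p - (x ^+ p)%:P).
Proof. by apply: poly_overB => //; [apply: poly_overXn | apply: poly_overC]. Qed.

Lemma XsubC_exp_pchar : ('X - x%:P) ^+ p = 'X^p - (x ^+ p)%:P.
Proof.
have pchar_polyK : p \in [pchar {poly K}] by rewrite pchar_poly.
by rewrite -(pFrobenius_autE pchar_polyK) rmorphB /= !pFrobenius_autE polyC_exp.
Qed.

(* A monic divisor of X^p - x^p = (X - x)^p over G is some (X - x)^k, whose constant term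
   (-x)^k lies in G; as k is prime to p this forces x into G. *)
Lemma poly_over_root_size_gt q : poly_over G q -> q != 0 -> root q x -> (p < size q)%N.
Proof.
have [n] := ubnP (size q); elim: n q => // n IHn q lt_qn Gq q_neq0 qx.
rewrite ltnNge; apply/negP => le_qp.
have lc_neq0 : lead_coef q != 0 by rewrite lead_coef_eq0.
set g := (lead_coef q)^-1 *: q.
have mon_g : g \is monic by rewrite monicE lead_coefZ mulVf.
have Gg : poly_over G g by apply: poly_overZ => //; apply: subfieldV => //; apply: Gq.
have size_g : size g = size q by rewrite size_scale ?invr_eq0.
have gx : root g x by rewrite rootE hornerZ (rootP qx) mulr0.
have [h [r [defXp lt_rg Gr]]] := poly_over_edivp subG Gg mon_g GXp.
have rx : root r x.
  move: (congr1 (horner^~ x) defXp) => /=.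
  rewrite [RHS]hornerD [in RHS]hornerM (rootP gx) mulr0 add0r => eq_rx.
  by rewrite rootE -eq_rx !hornerE subrr.
have r0 : r = 0.
  apply/eqP; apply: contraT => r_neq0.
  have lt_rn : (size r < n)%N by rewrite (leq_trans lt_rg) // size_g -ltnS.
  have := IHn r lt_rn Gr r_neq0 rx.
  by rewrite ltnNge (leq_trans (ltnW lt_rg)) // size_g.
have /dvdp_exp_XsubCP[k _] : g %| ('X - x%:P) ^+ p.
  by rewrite XsubC_exp_pchar defXp r0 addr0 dvdp_mull.
rewrite eqp_monic ?monic_exp ?monicXsubC // => /eqP gE.
have lt_kp : (k < p)%N by rewrite -ltnS -(size_exp_XsubC k x) -gE size_g.
have k_gt0 : (0 < k)%N.
  by rewrite lt0n; apply: contraTneq gx => k0; rewrite gE k0 expr0 rootE hornerC oner_eq0.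
have Gxk : G ((- x) ^+ k).
  by have := Gg 0%N; rewrite gE -horner_coef0 !hornerE ?sub0r ?add0r.
apply: notGx; rewrite -[x]opprK; apply: subfieldN => //.
apply: (subfield_coprime_exp subG p_gt0 _ Gxk); first by rewrite prime_coprime // gtnNdvd.
by rewrite (frobN pcharK); apply: subfieldN.
Qed.

Lemma adjoin_pth_root_span y : adjoin G [:: x] y ->
  exists2 q, poly_over G q & (size q <= p)%N /\ y = q.[x].
Proof.
move=> Gxy; have [q Gq ->] : exists2 q, poly_over G q & y = q.[x].
  move: y Gxy; apply: (@adjoin_ind _ _ pcharK _ _ (fun y => exists2 q, poly_over G q & y = q.[x]))
    => //.
  - by move=> z; rewrite inE => /eqP ->.
  - by move=> z Gz; exists z%:P; [apply: poly_overC | rewrite hornerC].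
  - by move=> z; rewrite inE => /eqP ->; exists 'X; [exact: (poly_overXn subG 1) | rewrite hornerX].
  - move=> _ _ [q1 Gq1 ->] [q2 Gq2 ->]; exists (q1 - q2); first exact: poly_overB.
    by rewrite hornerD hornerN.
  - by move=> _ _ [q1 Gq1 ->] [q2 Gq2 ->]; exists (q1 * q2); [apply: poly_overM | rewrite hornerM].
have [h [r [qE lt_r Gr]]] := poly_over_edivp subG GXp (monicXnsubC (x ^+ p) p_gt0) Gq.
rewrite qE.
exists r => //; split; first by rewrite -ltnS -(size_XnsubC (x ^+ p) p_gt0).
by rewrite !hornerE subrr mulr0 add0r.
Qed.

Lemma degree_adjoin_pth_root : degree_is (adjoin G [:: x]) G p.
Proof.
exists (fun i : 'I_p => x ^+ i).
split=> [i | c Gc sum0 i | y /adjoin_pth_root_span[q Gq [le_qp ->]]].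
- by apply: (subfieldX (adjoin_subfield G [:: x])); apply: adjoin_mem; rewrite inE.
- pose q := \poly_(j < p) (if insub j is Some i then c i else 0).
  have coef_q (j : 'I_p) : q`_j = c j by rewrite coef_poly ltn_ord valK.
  have Gq : poly_over G q.
    move=> j; rewrite coef_poly; case: ifP => _; last exact: subfield0.
    by case: insub => [i'|]; [apply: Gc | apply: subfield0].
  have qx : root q x.
    by apply/rootP; rewrite horner_poly -[RHS]sum0; apply: eq_bigr => j _; rewrite valK.
  suff q0 : q = 0 by rewrite -coef_q q0 coef0.
  apply/eqP; apply: contraT => q_neq0.
  by have := poly_over_root_size_gt Gq q_neq0 qx; rewrite ltnNge size_poly.
- by exists (fun i : 'I_p => q`_i) => //; rewrite (horner_coef_wide _ le_qp).
Qed.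

End AdjoinPthRoot.

Section PIndependence.
Variables (K : fieldType) (p : nat).
Hypothesis pcharK : p \in [pchar K].
Implicit Types (F G W : K -> Prop) (t u : seq K).

Inductive p_independent F : seq K -> Prop :=
| p_independent_nil : p_independent F [::]
| p_independent_rcons t x :
    p_independent F t -> ~ adjoin F t x -> F (x ^+ p) -> p_independent F (rcons t x).

Lemma pth_pow_in_rcons F t x : pth_pow_in p F (rcons t x) <-> pth_pow_in p F t /\ F (x ^+ p).
Proof.
split=> [txF | [tF xF] y]; last by rewrite mem_rcons inE => /orP[/eqP -> | /tF].
by split=> [y ty |]; apply: txF; rewrite mem_rcons inE ?ty ?orbT ?eqxx.
Qed.

Lemma pth_pow_in_sub F G t : subset_of F G -> pth_pow_in p F t -> pth_pow_in p G t.
Proof. by move=> FG tF x /tF /FG. Qed.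

Lemma p_independent_pth_pow F t : p_independent F t -> pth_pow_in p F t.
Proof. by elim=> [|u x _ uF _ xF] //; apply/pth_pow_in_rcons. Qed.

Lemma degree_p_independent F t :
  is_subfield F -> p_independent F t -> degree_is (adjoin F t) F (p ^ size t).
Proof.
move=> subF; elim=> [|u x _ IHu notFux xF].
  by rewrite adjoin_nil ?expn0 //; apply: degree_refl.
rewrite adjoin_rcons size_rcons expnS.
have subFu := adjoin_subfield F u.
apply: (degree_tower _ subFu (@adjoin_base _ F u)) => //; try exact: adjoin_subfield.
- exact: adjoin_base.
- by apply: degree_adjoin_pth_root => //; apply: adjoin_base.
Qed.

Lemma p_independent_cat F a c :
  p_independent F a -> p_independent (adjoin F a) c -> pth_pow_in p F c -> p_independent F (a ++ c).
Proof.
move=> indep_a; elim=> [|u x _ IHu notFaux _ /pth_pow_in_rcons[uF xF]]; first by rewrite cats0.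
by rewrite -rcons_cat; apply: p_independent_rcons => //; [apply: IHu | rewrite adjoin_cat].
Qed.

Lemma p_independent_sub F G t :
  subset_of G F -> p_independent F t -> pth_pow_in p G t -> p_independent G t.
Proof.
move=> GF; elim=> [|u x _ IHu notFux _ /pth_pow_in_rcons[uG xG]]; first by constructor.
by apply: p_independent_rcons => // [|/(adjoin_sub GF)]; [apply: IHu | apply: notFux].
Qed.

Lemma exists_p_independent_adjoin F u : is_subfield F -> pth_pow_in p F u ->
  exists d, [/\ p_independent F d, (size d <= size u)%N & adjoin F d = adjoin F u].
Proof.
move=> subF; elim/last_ind: u => [|u x IHu /pth_pow_in_rcons[uF xF]].
  by exists [::]; split=> //; apply: p_independent_nil.
have [d [indep_d le_du Fd_eq]] := IHu uF.
have -> : adjoin F (rcons u x) = adjoin (adjoin F d) [:: x] by rewrite adjoin_rcons Fd_eq.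
have [Fdx | notFdx] := classic (adjoin F d x).
  by exists d; rewrite size_rcons adjoin_seq1_id ?(leqW le_du) //; apply: adjoin_subfield.
exists (rcons d x); rewrite !size_rcons adjoin_rcons; split=> //.
exact: p_independent_rcons.
Qed.

Section Generated.
Variables (F : K -> Prop) (s : seq K).
Hypotheses (subF : is_subfield F) (sF : pth_pow_in p F s) (Fs_total : forall x, adjoin F s x).

(* Extending a to a p-basis of K and comparing with one extracted from s bounds its length. *)
Lemma p_independent_size_le a : p_independent F a -> (size a <= size s)%N.
Proof.
move=> indep_a; have [d0 [indep_d0 le_d0s Fd0_eq]] := exists_p_independent_adjoin subF sF.
have [d [indep_d _ Fad_eq]] :=
  exists_p_independent_adjoin (adjoin_subfield F a) (pth_pow_in_sub (@adjoin_base _ F a) sF).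
have indep_ad : p_independent F (a ++ d).
  by apply: p_independent_cat => // y _; apply: (adjoin_pth_pow pcharK subF sF).
have Fad_total : adjoin F (a ++ d) = adjoin F s.
  rewrite adjoin_cat Fad_eq; apply: predext => y; split=> _; first exact: Fs_total.
  by apply: (adjoin_sub (@adjoin_base _ F a)); apply: Fs_total.
have Dad := degree_p_independent subF indep_ad; rewrite Fad_total in Dad.
have Dd0 := degree_p_independent subF indep_d0; rewrite Fd0_eq in Dd0.
have /eqP := degree_uniq subF Dad Dd0.
rewrite eqn_exp2l ?prime_gt1 ?(pcharf_prime pcharK) // size_cat => /eqP eq_size.
by rewrite (leq_trans _ le_d0s) // -eq_size leq_addr.
Qed.

Lemma p_independent_extend W a : p_independent F a -> (forall x, x \in a -> W x) ->
  exists b, [/\ p_independent F b, forall x, x \in b -> W x & subset_of W (adjoin F b)].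
Proof.
have [k] := ubnP (size s - size a); elim: k a => // k IHk a lt_k indep_a aW.
case: (classic (subset_of W (adjoin F a))) => [Wa | notWa]; first by exists a.
have [w /(imply_to_and (W w))[Ww notFaw]] := not_all_ex_not _ _ notWa.
have indep_aw : p_independent F (rcons a w).
  by apply: p_independent_rcons => //; apply: (adjoin_pth_pow pcharK subF sF (Fs_total w)).
apply: (IHk (rcons a w)) => // [|x]; last by rewrite mem_rcons inE => /orP[/eqP -> | /aW].
by have := p_independent_size_le indep_aw; rewrite !size_rcons; lia.
Qed.

Lemma exists_p_basis W : is_subfield W -> subset_of F W ->
  exists a, p_independent F a /\ adjoin F a = W.
Proof.
move=> subW FW.
have [a [indep_a aW Wa]] :=
  @p_independent_extend W [::] (p_independent_nil F) (fun x => ltac:(by [])).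
by exists a; split=> //; apply: predext => x; split; [apply: adjoin_min | apply: Wa].
Qed.

End Generated.

End PIndependence.

Section PowerTowerStep.
Variables (K : fieldType) (p : nat) (W1 : K -> Prop) (a c : seq K).
Hypotheses (pcharK : p \in [pchar K]) (subW1 : is_subfield W1) (P1W1 : subset_of (powfield p 1) W1).
Hypotheses (indep_a : p_independent p (powfield p 1) a) (W1E : adjoin (powfield p 1) a = W1).
Hypotheses (indep_c : p_independent p W1 c) (W1c_total : forall x, adjoin W1 c x).

Local Notation P1 := (@powfield K p 1).
Local Notation P2 := (@powfield K p 2).
Local Notation W1p := (frob_image p W1).

Let W2 := adjoin W1p a.

Let subP1 : is_subfield P1. Proof. exact: powfield1_subfield. Qed.
Let subP2 : is_subfield P2. Proof. by rewrite powfield2E; apply/frob_image_subfield/subP1. Qed.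
Let subW1p : is_subfield W1p. Proof. exact: frob_image_subfield. Qed.
Let subW2 : is_subfield W2. Proof. exact: adjoin_subfield. Qed.

Let W1p_P1 : subset_of W1p P1. Proof. by rewrite powfield1E; apply: frob_image_sub. Qed.
Let P2_W1p : subset_of P2 W1p. Proof. by rewrite powfield2E; apply: frob_image_sub. Qed.
Let a_W1 x : x \in a -> W1 x. Proof. by rewrite -W1E; apply: adjoin_mem. Qed.
Let W2_W1 : subset_of W2 W1.
Proof. by apply: adjoin_min => // x /W1p_P1 /P1W1. Qed.
Let W1p_W2 : subset_of W1p W2. Proof. exact: adjoin_base. Qed.
Let P2_P1 : subset_of P2 P1. Proof. by move=> x /P2_W1p /W1p_P1. Qed.
Let P2_W2 : subset_of P2 W2. Proof. by move=> x /P2_W1p /W1p_W2. Qed.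

Let composite_W2_P1 : same_set (composite W2 P1) W1.
Proof.
move=> x; split; first by apply: composite_min.
rewrite -{1}W1E; apply: adjoin_min; [exact: composite_subfield | exact: composite_subr |].
by move=> y ay; apply: composite_subl; apply: adjoin_mem.
Qed.

(* W1 = W2(c^p) because K^p = (W1(c))^p = W1^p(c^p). *)
Let W2_frob_c : adjoin W2 (map (fun x => x ^+ p) c) = W1.
Proof.
have cW1 := p_independent_pth_pow indep_c.
apply: predext => x; split.
  by apply: adjoin_min => // _ /mapP[y /cW1 W1yp ->].
rewrite -{1}W1E; apply: adjoin_min; first exact: adjoin_subfield; last first.
  by move=> y ay; apply: adjoin_base; apply: adjoin_mem.
have -> : P1 = frob_image p (adjoin W1 c).
  by rewrite powfield1E; congr frob_image; apply: predext.
by rewrite frob_image_adjoin //; apply: adjoin_sub.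
Qed.

Let degree_K_W1 : degree_is (fun _ => True) W1 (p ^ size c).
Proof. by rewrite -[fun _ => True](@predext _ (adjoin W1 c)) //; apply: degree_p_independent. Qed.

Let degree_W1_P1 : degree_is W1 P1 (p ^ size a).
Proof. by rewrite -W1E; apply: degree_p_independent. Qed.

Let degree_K_P2 :
  degree_is (fun _ => True) P2 ((p ^ size c * p ^ size a) * (p ^ size c * p ^ size a)).
Proof.
have D_K_P1 := degree_tower subfieldT subW1 P1W1 (fun _ _ => I) degree_K_W1 degree_W1_P1.
have D_P1_P2 := degree_frob_image pcharK D_K_P1; rewrite -powfield1E -powfield2E in D_P1_P2.
exact: degree_tower subfieldT subP1 P2_P1 (fun _ _ => I) D_K_P1 D_P1_P2.
Qed.

Let degree_W2_P2 : degree_is W2 P2 (p ^ size a * p ^ size a).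
Proof.
have indep_a' : p_independent p W1p a.
  by apply: (p_independent_sub W1p_P1 indep_a) => x /a_W1 W1x; exists x.
have D_W1p_P2 := degree_frob_image pcharK degree_W1_P1; rewrite -powfield2E in D_W1p_P2.
have D_W2_W1p := degree_p_independent pcharK subW1p indep_a'.
exact: degree_tower subW2 subW1p P2_W1p W1p_W2 D_W2_W1p D_W1p_P2.
Qed.

Lemma degree_power_tower_step : degree_is W1 W2 (p ^ size c).
Proof.
have cW1 := p_independent_pth_pow indep_c.
have cpW2 : pth_pow_in p W2 (map (fun x => x ^+ p) c).
  by move=> _ /mapP[y /cW1 W1yp ->]; apply: W1p_W2; exists (y ^+ p).
have [d [indep_d _ W2d_eq]] := exists_p_independent_adjoin subW2 cpW2.
have D_W1_W2 := degree_p_independent pcharK subW2 indep_d; rewrite W2d_eq W2_frob_c in D_W1_W2.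
have D_W1_P2 := degree_tower subW1 subW2 P2_W2 W2_W1 D_W1_W2 degree_W2_P2.
have D_K_P2 := degree_tower subfieldT subW1 (fun x P2x => P1W1 (P2_P1 P2x)) (fun _ _ => I)
  degree_K_W1 D_W1_P2.
have /eqP := degree_uniq subP2 degree_K_P2 D_K_P2.
rewrite -!expnD eqn_exp2l ?prime_gt1 ?(pcharf_prime pcharK) // => /eqP size_dc.
by have -> : size c = size d by lia.
Qed.

Lemma power_tower_step : exists W2 : K -> Prop,
    [/\ is_subfield W2, subset_of W2 W1, subset_of P2 W2, same_set (composite W2 P1) W1 &
        forall n, degree_is W1 W2 n <-> degree_is (fun _ : K => True) W1 n].
Proof.
exists W2; split=> // n; split=> D.
- by rewrite (degree_uniq subW2 D degree_power_tower_step).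
- by rewrite (degree_uniq subW1 D degree_K_W1); apply: degree_power_tower_step.
Qed.

End PowerTowerStep.

Theorem mainTheorem13 (K : fieldType) (p : nat) (W1 : K -> Prop) :
  p \in [pchar K] ->
  fin_gen_over (@perfect_core K p) ->
  is_subfield W1 ->
  subset_of (@powfield K p 1) W1 ->
  exists W2 : K -> Prop,
    [/\ is_subfield W2,
        subset_of W2 W1,
        subset_of (powfield p 2) W2,
        same_set (composite W2 (powfield p 1)) W1 &
        (forall n : nat, degree_is W1 W2 n <-> degree_is (fun _ : K => True) W1 n)].
Proof.
move=> pcharK [s k_s] subW1 P1W1.
have subP1 := powfield1_subfield pcharK.
have sP1 : pth_pow_in p (powfield p 1) s by move=> x _; exists x; rewrite expn1.
have P1s_total x : adjoin (powfield p 1) s x by apply: (adjoin_sub _ (k_s x)) => y /(_ 1%N).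
have [a [indep_a W1E]] := exists_p_basis pcharK subP1 sP1 P1s_total subW1 P1W1.
have [c [indep_c _ W1c_eq]] := exists_p_independent_adjoin subW1 (pth_pow_in_sub P1W1 sP1).
apply: (power_tower_step pcharK subW1 P1W1 indep_a W1E indep_c) => x.
by rewrite W1c_eq; apply: (adjoin_sub P1W1).
Qed.
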